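(* Let $n\ge5$, $x_1,\dots,x_{n-1}>0$, $\gamma,\delta>0$ with $\gamma\ne1\ne\delta$, $x_0=1$, and let $\mathbf{R}$ be the $n\times n$ matrix with entries $r_{ij}=x_{j-1}/x_{i-1}$ except $r_{12}=\delta x_1$, $r_{21}=1/(\delta x_1)$, $r_{34}=\gamma x_3/x_2$, $r_{43}=x_2/(\gamma x_3)$. Let $\mathbf{w}^{EM}$ be its principal right eigenvector. If $\gamma,\delta>1$, then $w_1^{EM}/w_4^{EM}>x_3$; if $\gamma,\delta<1$, then $w_1^{EM}/w_4^{EM}<x_3$.
   Context: The principal right eigenvector is the positive (Perron) eigenvector belonging to the largest eigenvalue. *)

From HB Require Import structures.
From mathcomp Require Import all_boot all_order all_algebra.
From mathcomp Require Import reals.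
Set Implicit Arguments. Unset Strict Implicit. Unset Printing Implicit Defensive.
Import Order.TTheory GRing.Theory Num.Theory.
Local Open Scope ring_scope.

(* x_0 = 1, x_k = x k for k >= 1 (indices are the paper's, 1-based for w, r) *)
Definition xext {R : realType} (x : nat -> R) (k : nat) : R :=
  if k == 0%N then 1 else x k.

(* The matrix R of the paper, with 0-based indices i,j : 'I_n:
   paper's r_{(i+1)(j+1)} = x_j / x_i, except the four perturbed entries. *)
Definition EMmat {R : realType} (n : nat) (x : nat -> R) (g d : R) : 'M[R]_n :=
  \matrix_(i < n, j < n)
    if (i == 0%N :> nat) && (j == 1%N :> nat) then d * x 1%N
    else if (i == 1%N :> nat) && (j == 0%N :> nat) then 1 / (d * x 1%N)
    else if (i == 2%N :> nat) && (j == 3%N :> nat) then g * x 3%N / x 2%N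
    else if (i == 3%N :> nat) && (j == 2%N :> nat) then x 2%N / (g * x 3%N)
    else xext x j / xext x i.

Definition principal_right_eigenvector {R : realType} (n : nat)
  (A : 'M[R]_n) (w : 'cV[R]_n) : Prop :=
  (forall i, 0 < w i 0) /\
  exists lam : R, A *m w = lam *: w /\
    forall (mu : R) (v : 'cV[R]_n), v != 0 -> A *m v = mu *: v -> mu <= lam.

(* the k-th (0-based) coordinate of a column vector, 0 if out of range *)
Definition vcoord {R : realType} (n : nat) (w : 'cV[R]_n) (k : nat) : R :=
  if insub k is Some i then w i 0 else 0.

From mathcomp Require Import all_boot all_order all_algebra.
From mathcomp Require Import reals.
From mathcomp Require Import zify ring lra.
Set Implicit Arguments. Unset Strict Implicit. Unset Printing Implicit Defensive.
Import Order.TTheory GRing.Theory Num.Theory.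
Local Open Scope ring_scope.

(* Rows 1 and 4 of R are consistent rows (proportional to (x_{j-1})_j) up to
   one perturbed entry each, and row 4 is row 1 divided by x_3.  Subtracting
   x_3 times the fourth eigen-equation from the first one cancels everything
   but the perturbations:
     lam (w_1 - x_3 w_4) = (delta - 1) x_1 w_2 + (1 - 1/gamma) x_2 w_3,
   and lam > 0, w > 0 give the sign of w_1 - x_3 w_4. *)

Section MulmxColumn.
Variable R : realFieldType.

Lemma mulmx_col_perturb m n (A : 'M[R]_(m, n)) (w : 'cV[R]_n) (i : 'I_m)
    (k : 'I_n) (c : R) (b : 'I_n -> R) :
  (forall j, j != k -> A i j = c * b j) ->
  (A *m w) i 0 = c * \sum_j b j * w j 0 + (A i k - c * b k) * w k 0.
Proof.
move=> hA; rewrite mxE (bigD1 k) //= mulr_sumr [in RHS](bigD1 k) //=.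
rewrite (eq_bigr (fun j => c * (b j * w j 0))) => [|j /hA ->]; last first.
  by rewrite mulrA.
ring.
Qed.

Lemma mulmx_pos_gt0 m n (A : 'M[R]_(m, n)) (w : 'cV[R]_n) (i : 'I_m)
    (k : 'I_n) :
  (forall j, 0 < A i j) -> (forall j, 0 < w j 0) -> 0 < (A *m w) i 0.
Proof.
move=> Apos wpos; rewrite mxE (bigD1 k) //=.
apply: ltr_pwDl; first by rewrite mulr_gt0.
by apply: sumr_ge0 => j _; rewrite ltW // mulr_gt0.
Qed.

Lemma pos_eigenvalue_gt0 n (A : 'M[R]_n) (w : 'cV[R]_n) (lam : R) (i : 'I_n) :
  (forall j, 0 < A i j) -> (forall j, 0 < w j 0) ->
  A *m w = lam *: w -> 0 < lam.
Proof.
move=> Apos wpos Aw; have := mulmx_pos_gt0 i Apos wpos.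
by rewrite Aw mxE pmulr_lgt0.
Qed.

End MulmxColumn.

Section EMmatrix.
Variables (R : realType) (n : nat) (x : nat -> R) (g d : R).
Hypothesis x_gt0 : forall k : nat, (1 <= k)%N -> (k < n)%N -> 0 < x k.
Hypotheses (g_gt0 : 0 < g) (d_gt0 : 0 < d).

Let A := EMmat n x g d.

Lemma xext_gt0 (j : 'I_n) : 0 < xext x j.
Proof. by rewrite /xext; case: eqP => // j0; apply: x_gt0 => //; lia. Qed.

Lemma EMmat_gt0 i j : 0 < A i j.
Proof.
have xI (k : 'I_n) m : k = m :> nat -> (0 < m)%N -> 0 < x m.
  by move=> <- k0; apply: x_gt0.
have xi := xI i; have xj := xI j.
rewrite mxE; case: ifP => [/andP[_ /eqP j1]|_].
  by rewrite mulr_gt0 // (xj 1%N).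
case: ifP => [/andP[/eqP i1 _]|_].
  by rewrite divr_gt0 // mulr_gt0 // (xi 1%N).
case: ifP => [/andP[/eqP i2 /eqP j3]|_].
  by rewrite divr_gt0 ?mulr_gt0 // ?(xi 2%N) ?(xj 3%N).
case: ifP => [/andP[/eqP i3 /eqP j2]|_]; last by rewrite divr_gt0 ?xext_gt0.
by rewrite divr_gt0 ?mulr_gt0 // ?(xj 2%N) ?(xi 3%N).
Qed.

Lemma EMmat_row0 (i k : 'I_n) : i = 0%N :> nat -> k = 1%N :> nat ->
  forall j, j != k -> A i j = 1 * xext x j.
Proof.
move=> i0 k1 j jk; have /negbTE j1 : j != 1%N :> nat by rewrite -k1 val_eqE.
by rewrite mxE i0 j1 /= mul1r /xext /= divr1.
Qed.

Lemma EMmat_row3 (i k : 'I_n) : i = 3%N :> nat -> k = 2%N :> nat ->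
  forall j, j != k -> A i j = (x 3%N)^-1 * xext x j.
Proof.
move=> i3 k2 j jk; have /negbTE j2 : j != 2%N :> nat by rewrite -k2 val_eqE.
by rewrite mxE i3 j2 /= mulrC.
Qed.

Lemma EMmat_eigen_diff (w : 'cV[R]_n) (lam : R) (i0 i1 i2 i3 : 'I_n) :
  i0 = 0%N :> nat -> i1 = 1%N :> nat -> i2 = 2%N :> nat -> i3 = 3%N :> nat ->
  A *m w = lam *: w ->
  lam * (w i0 0 - x 3%N * w i3 0) =
    (d - 1) * x 1%N * w i1 0 + (x 2%N - x 2%N / g) * w i2 0.
Proof.
move=> e0 e1 e2 e3 Aw.
have x3 : 0 < x 3%N by have := xext_gt0 i3; rewrite /xext e3.
have row0 := mulmx_col_perturb w (EMmat_row0 e0 e1).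
have row3 := mulmx_col_perturb w (EMmat_row3 e3 e2).
have ew k : (A *m w) k 0 = lam * w k 0 by rewrite Aw mxE.
rewrite mulrBr mulrCA -!ew row0 row3.
rewrite !mxE e0 e1 e3 e2 /= /xext /=; field.
by rewrite (gt_eqF g_gt0) (gt_eqF x3).
Qed.

End EMmatrix.

Theorem mainTheorem20 (R : realType) (n : nat) (x : nat -> R) (g d : R)
  (w : 'cV[R]_n) :
  (5 <= n)%N ->
  (forall k : nat, (1 <= k)%N -> (k < n)%N -> 0 < x k) ->
  0 < g -> 0 < d -> g != 1 -> d != 1 ->
  principal_right_eigenvector (EMmat n x g d) w ->
  ((1 < g -> 1 < d -> x 3%N < vcoord w 0 / vcoord w 3) /\
   (g < 1 -> d < 1 -> vcoord w 0 / vcoord w 3 < x 3%N)).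
Proof.
move=> n5 x_gt0 g_gt0 d_gt0 _ _ [w_gt0 [lam [Aw _]]].
have [h0 h1 h2 h3] : [/\ 0 < n, 1 < n, 2 < n & 3 < n]%N by split; lia.
have vcoordE k (hk : (k < n)%N) : vcoord w k = w (Ordinal hk) 0.
  by rewrite /vcoord insubT.
rewrite (vcoordE 0%N h0) (vcoordE 3%N h3).
have lam_gt0 := pos_eigenvalue_gt0 (EMmat_gt0 x_gt0 g_gt0 d_gt0 (Ordinal h0))
  w_gt0 Aw.
have key := EMmat_eigen_diff x_gt0 g_gt0 d_gt0 (i0 := Ordinal h0)
  (i1 := Ordinal h1) (i2 := Ordinal h2) (i3 := Ordinal h3)
  erefl erefl erefl erefl Aw.
have x1 : 0 < x 1%N by apply: x_gt0.
have x2 : 0 < x 2%N by apply: x_gt0.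
have x3 : 0 < x 3%N by apply: x_gt0.
have [w1 w2] : 0 < w (Ordinal h1) 0 /\ 0 < w (Ordinal h2) 0 by split.
split=> Hg Hd.
- rewrite ltr_pdivlMr // -subr_gt0 -(pmulr_rgt0 _ lam_gt0) key.
  rewrite addr_gt0 // mulr_gt0 // ?mulr_gt0 // subr_gt0 //.
  by rewrite ltr_pdivrMr // ltr_pMr.
- rewrite ltr_pdivrMr // -subr_lt0 -(pmulr_rlt0 _ lam_gt0) key.
  have dneg : (d - 1) * x 1%N * w (Ordinal h1) 0 < 0.
    by rewrite !pmulr_llt0 // subr_lt0.
  have gneg : (x 2%N - x 2%N / g) * w (Ordinal h2) 0 < 0.
    by rewrite pmulr_llt0 // subr_lt0 ltr_pdivlMr // gtr_pMr.
  lra.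
Qed.
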